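(* Let $n\ge1$ and let $k_1\le k_2\le\cdots\le k_n$ be integers. Then $$\sum_{A} (-1)^{\#\{\text{special little triangles in }A\}}$$ over all arrowed Gelfand–Tsetlin patterns $A$ with bottom row $k_1,\ldots,k_n$ in which no entry is decorated with the double arrow $\nwarrow\nearrow$, equals the number of Gelfand–Tsetlin patterns with bottom row $k_1,\ldots,k_n$ in which every integer appears at most twice in each row, and whose entries each carry either no decoration or one decoration from $\{\nwarrow,\nearrow\}$, such that: (i) if an entry $a$ equals its $\nearrow$-neighbor then $a$ is not decorated with $\nearrow$, and if $a$ equals its $\nwarrow$-neighbor then $a$ is not decorated with $\nwarrow$; and (ii) whenever two entries in the same row are equal, at least one of them is decorated.
   Context: A Gelfand–Tsetlin pattern with $n$ rows is a triangular array of integers $(a_{i,j})_{1\le j\le i\le n}$, row $i$ being $a_{i,1},\ldots,a_{i,i}$, drawn so that $a_{i-1,j}$ sits between $a_{i,j}$ and $a_{i,j+1}$, satisfying $a_{i+1,j}\le a_{i,j}\le a_{i+1,j+1}$ for all $1\le j\le i<n$. Row $n$ is the bottom row. For an entry $a_{i,j}$: its $\nwarrow$-neighbor is $a_{i-1,j-1}$ and its $\nearrow$-neighbor is $a_{i-1,j}$ (when they exist), its $\swarrow$-neighbor is $a_{i+1,j}$ and its $\searrow$-neighbor is $a_{i+1,j+1}$, and its left/right neighbors are $a_{i,j-1}$, $a_{i,j+1}$. An arrowed Gelfand–Tsetlin pattern is a Gelfand–Tsetlin pattern in which each entry either carries no decoration or carries exactly one decoration from $\{\nwarrow,\nearrow,\nwarrow\nearrow\}$,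 subject to: if an entry $a$ equals its $\nearrow$-neighbor and is decorated with $\nearrow$ or $\nwarrow\nearrow$, then the entry to the right of $a$ in the same row also equals $a$ and is decorated with $\nwarrow$ or $\nwarrow\nearrow$; and if $a$ equals its $\nwarrow$-neighbor and is decorated with $\nwarrow$ or $\nwarrow\nearrow$, then the entry to the left of $a$ in the same row also equals $a$ and is decorated with $\nearrow$ or $\nwarrow\nearrow$. A special little triangle is an entry $a$ that equals both its $\swarrow$-neighbor $b$ and its $\searrow$-neighbor $c$, where $b$ is decorated with $\nearrow$ or $\nwarrow\nearrow$ and $c$ is decorated with $\nwarrow$ or $\nwarrow\nearrow$. *)

From mathcomp Require Import all_boot all_order all_algebra.
Set Implicit Arguments. Unset Strict Implicit. Unset Printing Implicit Defensive.
Import Order.TTheory GRing.Theory Num.Theory.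
Local Open Scope ring_scope.

(* A (possibly decorated) Gelfand-Tsetlin pattern with n rows is represented by
   - P : seq (seq int), the rows; row i (1-based, 1 <= i <= n) is nth [::] P (i-1)
     and has exactly i entries;
   - D : seq (seq (bool * bool)), of the same shape, the decorations.
   A decoration (nw, ne) is read as: (false,false) = no decoration,
   (true,false) = ↖, (false,true) = ↗, (true,true) = ↖↗.
   So "decorated with ↗ or ↖↗" is the bit ne, "decorated with ↖ or ↖↗" is nw. *)

Definition deco := (bool * bool)%type.
Definition nwb (d : deco) : bool := d.1.
Definition neb (d : deco) : bool := d.2.

Definition ent (P : seq (seq int)) (i j : nat) : int := nth 0 (nth [::] P i.-1) j.-1.
Definition dec (D : seq (seq deco)) (i j : nat) : deco :=
  nth (false, false) (nth [::] D i.-1) j.-1.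

Definition pos (n i j : nat) : Prop := (1 <= j)%N /\ (j <= i)%N /\ (i <= n)%N.

Definition has_shape {T : Type} (n : nat) (P : seq (seq T)) : Prop :=
  size P = n /\ forall i, (i < n)%N -> size (nth [::] P i) = i.+1.

Definition GT (n : nat) (k : seq int) (P : seq (seq int)) : Prop :=
  has_shape n P /\ nth [::] P n.-1 = k /\
  forall i j, (1 <= j)%N -> (j <= i)%N -> (i < n)%N ->
    ent P i.+1 j <= ent P i j /\ ent P i j <= ent P i.+1 j.+1.

Definition arrow_ok (P : seq (seq int)) (D : seq (seq deco)) (i j : nat) : Prop :=
  ((2 <= i)%N -> (j <= i.-1)%N -> ent P i j = ent P i.-1 j -> neb (dec D i j) ->
     (j < i)%N /\ ent P i j.+1 = ent P i j /\ nwb (dec D i j.+1)) /\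
  ((2 <= i)%N -> (2 <= j)%N -> ent P i j = ent P i.-1 j.-1 -> nwb (dec D i j) ->
     ent P i j.-1 = ent P i j /\ neb (dec D i j.-1)).

Definition arrowedGT (n : nat) (k : seq int) (A : seq (seq int) * seq (seq deco)) : Prop :=
  GT n k A.1 /\ has_shape n A.2 /\
  forall i j, pos n i j -> arrow_ok A.1 A.2 i j.

Definition no_double (n : nat) (D : seq (seq deco)) : Prop :=
  forall i j, pos n i j -> ~~ (nwb (dec D i j) && neb (dec D i j)).

Definition special (P : seq (seq int)) (D : seq (seq deco)) (i j : nat) : bool :=
  [&& ent P i j == ent P i.+1 j, ent P i j == ent P i.+1 j.+1,
      neb (dec D i.+1 j) & nwb (dec D i.+1 j.+1)].

Definition num_special (n : nat) (A : seq (seq int) * seq (seq deco)) : nat :=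
  (\sum_(1 <= i < n) \sum_(1 <= j < i.+1) special A.1 A.2 i j)%N.

Definition is_decorated (d : deco) : bool := nwb d || neb d.

Definition second_family (n : nat) (k : seq int) (B : seq (seq int) * seq (seq deco)) : Prop :=
  GT n k B.1 /\ has_shape n B.2 /\ no_double n B.2 /\
  (forall i x, (1 <= i)%N -> (i <= n)%N -> (count_mem x (nth [::] B.1 i.-1) <= 2)%N) /\
  (forall i j, pos n i j ->
     ((2 <= i)%N -> (j <= i.-1)%N -> ent B.1 i j = ent B.1 i.-1 j -> ~~ neb (dec B.2 i j)) /\
     ((2 <= i)%N -> (2 <= j)%N -> ent B.1 i j = ent B.1 i.-1 j.-1 -> ~~ nwb (dec B.2 i j))) /\
  (forall i j1 j2, pos n i j1 -> pos n i j2 -> (j1 < j2)%N -> ent B.1 i j1 = ent B.1 i j2 ->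
     is_decorated (dec B.2 i j1) || is_decorated (dec B.2 i j2)).

From mathcomp Require Import all_boot all_order all_algebra.
From mathcomp Require Import zify.
Import Order.TTheory GRing.Theory Num.Theory.
Set Implicit Arguments. Unset Strict Implicit. Unset Printing Implicit Defensive.
Local Open Scope ring_scope.

(* A sign-reversing involution.  The entries of a pattern are never changed, only
   its decorations, and the weight is (-1)^(number of special little triangles).
   - If some row contains three equal entries, climbing up along the interlacing
     inequalities leads to a "flippable" triple: one above which the run of equal
     entries has length exactly two.  Its arrow conditions say precisely that a ↗ on
     an entry of the triple goes with a ↖ on its right neighbour, and the eight
     admissible decorations of the triple pair up so that partners differ by one
     adjacent (↗, ↖), i.e. by one special little triangle just above.
   - Otherwise two adjacent equal entries decorated (none, none) or (↗, ↖) are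
     toggled, again changing the number of special little triangles by one.
   The move is made at the first such site; it stays the first one afterwards, so
   the map is an involution.  Its fixed points have no special little triangle, at
   most two equal entries per row, and satisfy (i) and (ii); conversely every pattern
   of the second family is a fixed point. *)

Lemma sum_involution (T : eqType) (s : seq T) (g : T -> T) (f : T -> int) :
  uniq s -> {in s, forall x, g x \in s} -> {in s, forall x, g (g x) = x} ->
  {in s, forall x, g x != x -> f (g x) = - f x} ->
  {in s, forall x, g x = x -> f x = 1} ->
  \sum_(x <- s) f x = (count (fun x => g x == x) s)%:Z.
Proof.
move=> us gs gK fN f1.
have perm_g : perm_eq s (map g s).
  apply: uniq_perm => //.
    by rewrite map_inj_in_uniq // => x y xs ys e; rewrite -(gK x xs) e gK.
  move=> x; apply/idP/mapP => [xs | [y ys ->]]; last exact: gs.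
  by exists (g x); [exact: gs | rewrite gK].
have pair_sum : \sum_(x <- s) (f x + f (g x)) = \sum_(x <- s) ((g x == x)%:Z * 2).
  apply: eq_big_seq => x xs; case: eqP => [fx | /eqP nfx]; first by rewrite fx f1.
  by rewrite fN // subrr.
have sum_g : \sum_(x <- s) f (g x) = \sum_(x <- s) f x.
  by rewrite [RHS](perm_big _ perm_g) big_map.
have count_fixed : \sum_(x <- s) (g x == x)%:Z = (count (fun x => g x == x) s)%:Z.
  rewrite -sum1_count (big_morph Posz PoszD (erefl 0%:Z)) big_mkcond /=.
  rewrite [RHS]big_mkcond; apply: eq_bigr => x _.
  by case: eqP.
move: pair_sum; rewrite big_split /= sum_g -big_distrl /= count_fixed.
set S := \sum_(x <- s) f x.
lia.
Qed.

Lemma big_nat_agree_off (a lo hi b : nat) (F G : nat -> nat) :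
  (a <= lo)%N -> (lo <= hi)%N -> (hi <= b)%N ->
  (forall x, (a <= x < b)%N -> ~~ (lo <= x < hi)%N -> F x = G x) ->
  (\sum_(a <= x < b) F x + \sum_(lo <= x < hi) G x =
   \sum_(a <= x < b) G x + \sum_(lo <= x < hi) F x)%N.
Proof.
move=> alo lohi hib FG.
rewrite !(big_cat_nat alo (leq_trans lohi hib)) !(big_cat_nat lohi hib) /=.
have -> : (\sum_(a <= x < lo) F x = \sum_(a <= x < lo) G x)%N.
  by apply: eq_big_nat => x xr; apply: FG; lia.
have -> : (\sum_(hi <= x < b) F x = \sum_(hi <= x < b) G x)%N.
  by apply: eq_big_nat => x xr; apply: FG; lia.
lia.
Qed.

Lemma signr_flip (x y o w : nat) : (x + o = y + w)%N -> odd (o + w) ->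
  (-1) ^+ x = - (-1) ^+ y :> int.
Proof.
move=> e ow; have : odd (x + o) = odd (y + w) by rewrite e.
move: ow; rewrite !oddD -(signr_odd _ x) -(signr_odd _ y).
by case: (odd x); case: (odd y); case: (odd o); case: (odd w).
Qed.

Definition no_arrow : deco := (false, false).
Definition arrow_nw : deco := (true, false).
Definition arrow_ne : deco := (false, true).

Definition single (d : deco) : bool := ~~ (nwb d && neb d).

Definition set_dec (D : seq (seq deco)) (i j : nat) (d : deco) : seq (seq deco) :=
  set_nth [::] D i.-1 (set_nth (false, false) (nth [::] D i.-1) j.-1 d).

Lemma dec_set_dec D i j d i' j' : (1 <= i)%N -> (1 <= j)%N -> (1 <= i')%N -> (1 <= j')%N ->
  dec (set_dec D i j d) i' j' = if (i' == i) && (j' == j) then d else dec D i' j'.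
Proof.
case: i i' j j' => [|i] [|i'] [|j] [|j'] // _ _ _ _.
rewrite /dec /set_dec /= nth_set_nth /= !eqSS.
by case: eqP => [-> | _] //=; rewrite nth_set_nth.
Qed.

Lemma has_shape_set_dec n D i j d : has_shape n D -> (1 <= j)%N -> (j <= i)%N -> (i <= n)%N ->
  has_shape n (set_dec D i j d).
Proof.
move=> [sD sR] j1 ji ni; split; first by rewrite size_set_nth sD; lia.
move=> i' i'n; rewrite nth_set_nth /=; case: eqP => [-> | _]; last exact: sR.
by rewrite size_set_nth sR; lia.
Qed.

Fixpoint set_row (D : seq (seq deco)) (i j : nat) (ds : seq deco) : seq (seq deco) :=
  if ds is d :: ds' then set_row (set_dec D i j d) i j.+1 ds' else D.

Lemma dec_set_row D i j ds i' j' : (1 <= i)%N -> (1 <= j)%N -> (1 <= i')%N -> (1 <= j')%N ->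
  dec (set_row D i j ds) i' j' =
  if (i' == i) && (j <= j' < j + size ds)%N then nth no_arrow ds (j' - j) else dec D i' j'.
Proof.
elim: ds D j => [|d ds IH] D j i1 j1 i'1 j'1 /=.
  have -> : (j <= j' < j + 0)%N = false by lia.
  by rewrite andbF.
rewrite IH ?dec_set_dec //.
case: (i' == i) => //=.
case: (ltngtP j' j) => [_ | gt | ->] //.
- by rewrite addSnnS; have -> : (j' - j = (j' - j.+1).+1)%N by lia.
- by rewrite subnn addnS ltnS leq_addr.
Qed.

Lemma has_shape_set_row n D i j ds : has_shape n D -> (1 <= j)%N -> (j + size ds <= i.+1)%N ->
  (i <= n)%N -> has_shape n (set_row D i j ds).
Proof.
elim: ds D j => [|d ds IH] D j //= sh j1 jds ni.
by apply: IH => //; [apply: has_shape_set_dec => //; lia | rewrite addSnnS].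
Qed.

Definition row_window (D : seq (seq deco)) (i j m : nat) : seq deco :=
  mkseq (fun l => dec D i (j + l)) m.

Lemma row_window_set_row D i j ds : (1 <= i)%N -> (1 <= j)%N ->
  row_window (set_row D i j ds) i j (size ds) = ds.
Proof.
move=> i1 j1; apply: (@eq_from_nth _ no_arrow); first by rewrite size_mkseq.
move=> l; rewrite size_mkseq => lds; rewrite nth_mkseq // dec_set_row ?eqxx //; last by lia.
by rewrite leq_addr ltn_add2l lds addKn.
Qed.

Lemma has_shape_dec_inj n (D1 D2 : seq (seq deco)) : has_shape n D1 -> has_shape n D2 ->
  (forall i j, (1 <= j)%N -> (j <= i)%N -> (i <= n)%N -> dec D1 i j = dec D2 i j) -> D1 = D2.
Proof.
move=> [s1 r1] [s2 r2] D12.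
apply: (@eq_from_nth _ [::]) => [|i]; first by rewrite s1 s2.
rewrite s1 => ni; apply: (@eq_from_nth _ no_arrow) => [|j]; first by rewrite r1 ?r2.
by rewrite r1 // => ji; apply: (D12 i.+1 j.+1).
Qed.

Lemma set_row_restore n D i j ds : has_shape n D -> (1 <= j)%N -> (j + size ds <= i.+1)%N ->
  (1 <= i <= n)%N -> set_row (set_row D i j ds) i j (row_window D i j (size ds)) = D.
Proof.
move=> sh j1 jds /andP [i1 ni].
have sh' := has_shape_set_row sh j1 jds ni.
apply: (has_shape_dec_inj (has_shape_set_row sh' _ _ _) sh) => //; rewrite ?size_mkseq //.
move=> i' j' j'1 j'i' i'n; rewrite dec_set_row ?size_mkseq //; try lia.
case: ifP => [/and3P [/eqP -> jj' j'j] | out]; last by rewrite dec_set_row ?out //; lia.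
by rewrite nth_mkseq ?subnKC //; lia.
Qed.

Lemma no_double_set_row n D i j ds : no_double n D -> (1 <= i)%N -> (1 <= j)%N ->
  all single ds -> no_double n (set_row D i j ds).
Proof.
move=> ND i1 j1 /allP dsd i' j' [j'1 [j'i' i'n]]; rewrite dec_set_row //; last by lia.
case: ifP => [/and3P [_ jj' j'j] | _]; last exact: ND.
by apply/dsd/mem_nth; rewrite ltn_subLR.
Qed.

Definition sites (n : nat) : seq (nat * nat) := [seq (i, j) | i <- iota 1 n, j <- iota 1 n].

Lemma mem_sites n i j : ((i, j) \in sites n) = (1 <= i <= n)%N && (1 <= j <= n)%N.
Proof.
apply/allpairsP/idP => [[[a b] [/= + + [-> ->]]] | /andP [ir jr]].
  by rewrite !mem_iota; lia.
by exists (i, j); rewrite !mem_iota /=; split => //; lia.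
Qed.

Definition first_site (p : pred (nat * nat)) (n : nat) : nat * nat :=
  nth (0, 0)%N (sites n) (find p (sites n)).

Lemma first_siteP p n : has p (sites n) -> p (first_site p n) /\ first_site p n \in sites n.
Proof. by move=> pn; split; [exact: nth_find | apply: mem_nth; rewrite -has_find]. Qed.

Lemma eq_first_site p q n : {in sites n, p =1 q} -> first_site p n = first_site q n.
Proof. by move=> pq; rewrite /first_site (eq_in_find pq). Qed.

Definition eq_triple (P : seq (seq int)) (i j : nat) : bool :=
  [&& (1 <= j)%N, (j.+2 <= i)%N, ent P i j == ent P i j.+1 & ent P i j.+1 == ent P i j.+2].

(* By interlacing, the two entries above an equal triple equal it too; the triple is
   flippable when this run of equal entries in row [i - 1] has length exactly two. *)
Definition flippable_triple (P : seq (seq int)) (s : nat * nat) : bool :=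
  let: (i, j) := s in
  [&& eq_triple P i j, (j == 1%N) || (ent P i.-1 j.-1 != ent P i j)
    & (j.+2 == i) || (ent P i.-1 j.+2 != ent P i j)].

Section GelfandTsetlin.

Variables (n : nat) (k : seq int) (P : seq (seq int)).
Hypothesis G : GT n k P.

Lemma GT_interlacing i j : (2 <= i <= n)%N -> (1 <= j < i)%N ->
  ent P i j <= ent P i.-1 j <= ent P i j.+1.
Proof.
move=> /andP [i2 ni] /andP [j1 ji]; have [_ [_ inter]] := G.
have [lo hi] : ent P i.-1.+1 j <= ent P i.-1 j /\ ent P i.-1 j <= ent P i.-1.+1 j.+1.
  by apply: inter; lia.
by rewrite prednK in lo hi; [rewrite lo hi | lia..].
Qed.

Lemma GT_pair_above i j : (2 <= i <= n)%N -> (1 <= j < i)%N ->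
  ent P i j = ent P i j.+1 -> ent P i.-1 j = ent P i j.
Proof.
move=> ir jr e; have /andP [lo hi] := GT_interlacing ir jr.
by apply/eqP; rewrite eq_le lo andbT e.
Qed.

Lemma has_flippable_triple i j : (i <= n)%N -> eq_triple P i j ->
  has (flippable_triple P) (sites n).
Proof.
elim: i j => [|i IH] j ni tr; first by move: tr => /and4P []; lia.
have [j1 ji /eqP e1 /eqP e2] := and4P tr.
case fl: (flippable_triple P (i.+1, j)).
  by apply/hasP; exists (i.+1, j) => //; rewrite mem_sites; lia.
have /= a0 := GT_pair_above (i := i.+1) (j := j) ltac:(lia) ltac:(lia) e1.
have /= a1 := GT_pair_above (i := i.+1) (j := j.+1) ltac:(lia) ltac:(lia) e2.
move: fl; rewrite /= tr /= => /negbT; rewrite negb_and !negb_or !negbK.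
case/orP => [/andP [j_ne1 /eqP left_eq] | /andP [j_ne /eqP right_eq]].
  apply: (IH j.-1); first by lia.
  by rewrite /eq_triple prednK ?left_eq ?a0 -?e1 ?a1 ?eqxx ?andbT //; lia.
apply: (IH j); first by lia.
by rewrite /eq_triple a0 a1 right_eq e1 !eqxx !andbT; lia.
Qed.

Lemma no_flippable_eq_triple i j : ~~ has (flippable_triple P) (sites n) -> (i <= n)%N ->
  eq_triple P i j = false.
Proof. by move=> no_flip ni; apply: (contraNF _ no_flip) => /(has_flippable_triple ni). Qed.

Hypothesis k_sorted : sorted (fun x y : int => x <= y) k.

Lemma GT_row_step i j : (1 <= i <= n)%N -> (1 <= j < i)%N -> ent P i j <= ent P i j.+1.
Proof.
move=> /andP [i1 ni] /andP [j1 ji]; have [[sP sR] [bot inter]] := G.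
case: (ltnP i n) => [lt_in | le_ni].
  have [_ lo] := inter i j j1 (ltnW ji) lt_in.
  have [hi _] := inter i j.+1 (ltnW j1) ji lt_in.
  exact: le_trans lo hi.
have -> : i = n by lia.
have size_k : size k = n by rewrite -bot sR; lia.
rewrite /ent bot; move/(sortedP 0): k_sorted => /(_ j.-1); rewrite prednK //.
by apply; rewrite size_k; lia.
Qed.

Lemma GT_row_mono i j1 j2 : (1 <= i <= n)%N -> (1 <= j1)%N -> (j1 <= j2 <= i)%N ->
  ent P i j1 <= ent P i j2.
Proof.
move=> ir j1pos /andP [le12]; rewrite -(subnKC le12).
elim: (j2 - j1)%N => [|d IH] ji; first by rewrite addn0.
rewrite addnS; apply: le_trans (IH _) (GT_row_step ir _); lia.
Qed.

Lemma GT_row_sorted i : (1 <= i <= n)%N -> sorted (fun x y : int => x <= y) (nth [::] P i.-1).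
Proof.
move=> ir; apply/(sortedP 0) => m; have [[_ sR] _] := G.
rewrite sR; last by lia.
move=> lt_mi; have := GT_row_step (j := m.+1) ir; rewrite /ent /=; apply; lia.
Qed.

End GelfandTsetlin.

Lemma count_mem_ge3 (s : seq int) x j : (j.+2 < size s)%N ->
  nth 0 s j = x -> nth 0 s j.+1 = x -> nth 0 s j.+2 = x -> (3 <= count_mem x s)%N.
Proof.
move=> js e0 e1 e2; rewrite -(cat_take_drop j s) count_cat.
rewrite (drop_nth 0 (_ : j < size s)%N) ?(drop_nth 0 (_ : j.+1 < size s)%N) ?(drop_nth 0 js);
  try lia.
by rewrite e0 e1 e2 /= eqxx; lia.
Qed.

Lemma sorted_count_mem_le2 (s : seq int) x : sorted (fun a b : int => a <= b) s ->
  (forall j, (j.+2 < size s)%N ->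
     ~~ [&& nth 0 s j == x, nth 0 s j.+1 == x & nth 0 s j.+2 == x]) ->
  (count_mem x s <= 2)%N.
Proof.
have above_x a s' : x < a -> path (fun a b : int => a <= b) a s' -> count_mem x s' = 0%N.
  move=> xa /(order_path_min le_trans) /allP s'a; apply/count_memPn/negP => /s'a.
  by rewrite leNgt xa.
elim: s => [|a s IH] //= s_sorted no3.
case: (eqVneq a x) => [ax | ax]; last first.
  by rewrite add0n; apply: IH => [|j]; [exact: path_sorted s_sorted | exact: (no3 j.+1)].
subst a; case: s s_sorted no3 {IH} => [|b s] //= /andP [xb b_path] no3.
case: (eqVneq b x) => [eb | bx]; last by rewrite (above_x b) // lt_neqAle eq_sym bx xb.
case: s b_path no3 => [|c s] //= /andP [bc c_path] no3.
have cx : c != x by have := no3 0%N isT; rewrite /= eb !eqxx.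
by rewrite (negbTE cx) (above_x c) // lt_neqAle eq_sym cx -eb.
Qed.

Definition toggleable (a b : deco) : bool :=
  ((a == no_arrow) && (b == no_arrow)) || ((a == arrow_ne) && (b == arrow_nw)).

Definition toggleable_pair (P : seq (seq int)) (D : seq (seq deco)) (s : nat * nat) : bool :=
  let: (i, j) := s in
  [&& (1 <= j < i)%N, ent P i j == ent P i j.+1 & toggleable (dec D i j) (dec D i j.+1)].

Definition toggle (ds : seq deco) : seq deco :=
  match ds with
  | [:: (false, false); (false, false)] => [:: arrow_ne; arrow_nw]
  | [:: (false, true); (true, false)] => [:: no_arrow; no_arrow]
  | _ => ds
  end.

Definition triple_arrows (a b c : deco) : bool :=
  [&& neb a ==> nwb b, neb b ==> nwb c, nwb b ==> neb a & nwb c ==> neb b].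

(* The eight admissible decorations of a flippable triple: each one without a
   (↗, ↖) pair is matched with one having exactly one such pair. *)
Definition flip_triple (ds : seq deco) : seq deco :=
  match ds with
  | [:: (false, false); (false, false); (false, false)] => [:: arrow_ne; arrow_nw; no_arrow]
  | [:: (false, true); (true, false); (false, false)] => [:: no_arrow; no_arrow; no_arrow]
  | [:: (false, false); (false, false); (false, true)] => [:: arrow_ne; arrow_nw; arrow_ne]
  | [:: (false, true); (true, false); (false, true)] => [:: no_arrow; no_arrow; arrow_ne]
  | [:: (true, false); (false, false); (false, false)] => [:: arrow_nw; arrow_ne; arrow_nw]
  | [:: (true, false); (false, true); (true, false)] => [:: arrow_nw; no_arrow; no_arrow]
  | [:: (true, false); (false, false); (false, true)] => [:: no_arrow; arrow_ne; arrow_nw]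
  | [:: (false, false); (false, true); (true, false)] => [:: arrow_nw; no_arrow; arrow_ne]
  | _ => ds
  end.

Definition ne_nw (a b : deco) : nat := neb a && nwb b.

Lemma toggleP a b : toggleable a b ->
  exists a' b', [/\ toggle [:: a; b] = [:: a'; b'], toggleable a' b',
    toggle [:: a'; b'] = [:: a; b] & odd (ne_nw a b + ne_nw a' b')].
Proof. by case: a b => [[] []] [[] []] //= _; do 2 eexists. Qed.

Lemma toggleable_single a b : toggleable a b -> single a && single b.
Proof. by case: a b => [[] []] [[] []]. Qed.

Lemma flip_tripleP a b c : [&& single a, single b & single c] -> triple_arrows a b c ->
  exists a' b' c', [/\ flip_triple [:: a; b; c] = [:: a'; b'; c'],
    [&& single a', single b' & single c'], triple_arrows a' b' c',
    flip_triple [:: a'; b'; c'] = [:: a; b; c] &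
    odd (ne_nw a b + ne_nw b c + (ne_nw a' b' + ne_nw b' c'))].
Proof. by case: a b c => [[] []] [[] []] [[] []] //= _ _; do 3 eexists. Qed.

Lemma arrow_ok_transfer P D D' i j :
  dec D' i j = dec D i j ->
  ((2 <= j)%N -> neb (dec D' i j.-1) = neb (dec D i j.-1) \/
     (ent P i j.-1 = ent P i j -> ent P i.-1 j.-1 = ent P i j -> False)) ->
  (nwb (dec D' i j.+1) = nwb (dec D i j.+1) \/
     (ent P i j.+1 = ent P i j -> ent P i.-1 j = ent P i j -> False)) ->
  arrow_ok P D i j -> arrow_ok P D' i j.
Proof.
move=> same left right [ne_ok nw_ok]; rewrite /arrow_ok same; split.
  move=> i2 ji e ne; have [ji' [e' nw]] := ne_ok i2 ji e ne.
  by case: right => [-> | no_run] //; exfalso; exact: no_run.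
move=> i2 j2 e nw; have [e' ne] := nw_ok i2 j2 e nw.
by case: (left j2) => [-> | no_run] //; exfalso; exact: no_run.
Qed.

(* Changing the decorations of row [i] in the columns [lo <= j < hi] can only affect
   arrow conditions and special little triangles inside the window, unless a run of
   equal entries continues across one of its ends through the entry above. *)
Definition isolated_window (P : seq (seq int)) (i lo hi : nat) : Prop :=
  ((2 <= lo)%N -> ent P i lo = ent P i lo.-1 -> ent P i.-1 lo.-1 = ent P i lo.-1 -> False) /\
  ((hi <= i)%N -> ent P i hi.-1 = ent P i hi -> ent P i.-1 hi.-1 = ent P i hi -> False).

Lemma arrowedGT_set_row n k P D i lo ds :
  arrowedGT n k (P, D) -> (1 <= i <= n)%N -> (1 <= lo)%N -> (lo + size ds <= i.+1)%N ->
  isolated_window P i lo (lo + size ds) ->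
  (forall j, (lo <= j < lo + size ds)%N -> arrow_ok P (set_row D i lo ds) i j) ->
  arrowedGT n k (P, set_row D i lo ds).
Proof.
move=> [G [sh AO]] /andP [i1 ni] lo1 hi_le [left right] window.
split => //; split; first exact: has_shape_set_row.
move=> i' j [j1 [ji' i'n]] /=; set hi := (lo + size ds)%N in hi_le left right window *.
have decE j' : (1 <= j')%N -> ~~ ((i' == i) && (lo <= j' < hi))%N ->
    dec (set_row D i lo ds) i' j' = dec D i' j'.
  by move=> j'1 /negbTE out; rewrite dec_set_row -/hi ?out //; lia.
have [/andP [/eqP -> jw] | out] := boolP ((i' == i) && (lo <= j < hi))%N; first exact: window.
apply: (arrow_ok_transfer (D := D)); [exact: decE | move=> j2 | | exact: AO].
  have [/andP [/eqP ei jw] | out'] := boolP ((i' == i) && (lo <= j.-1 < hi))%N.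
    right; subst i'; have -> : j = hi by lia.
    by apply: right; lia.
  by left; rewrite decE //; lia.
have [/andP [/eqP ei jw] | out'] := boolP ((i' == i) && (lo <= j.+1 < hi))%N.
  right; subst i'; have -> : j = lo.-1 by lia.
  by rewrite prednK //; apply: left; lia.
by left; rewrite decE //; lia.
Qed.

Lemma special_no_run P D i j :
  ~ (ent P i j = ent P i.+1 j /\ ent P i j = ent P i.+1 j.+1) -> special P D i j = false.
Proof. by move=> no_run; apply/negbTE/negP => /and4P [/eqP e1 /eqP e2 _ _]; apply: no_run. Qed.

Lemma num_special_set_row n P D i lo ds :
  (2 <= i <= n)%N -> (1 <= lo)%N -> (0 < size ds)%N -> (lo + size ds <= i.+1)%N ->
  isolated_window P i lo (lo + size ds) ->
  (num_special n (P, set_row D i lo ds) +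
     \sum_(lo <= j < (lo + size ds).-1) special P D i.-1 j =
   num_special n (P, D) +
     \sum_(lo <= j < (lo + size ds).-1) special P (set_row D i lo ds) i.-1 j)%N.
Proof.
move=> /andP [i2 ni] lo1 ds0 hi_le [left right]; set D' := set_row D i lo ds.
have i_eq : i.-1.+1 = i by lia.
have decE i' j' : (1 <= i')%N -> (1 <= j')%N -> ~~ ((i' == i) && (lo <= j' < lo + size ds))%N ->
    dec D' i' j' = dec D i' j'.
  by move=> i'1 j'1 /negbTE out; rewrite /D' dec_set_row ?out //; lia.
have row_side x : (1 <= x < n)%N -> ~~ (i.-1 <= x < i.-1.+1)%N ->
    (\sum_(1 <= j < x.+1) special P D' x j = \sum_(1 <= j < x.+1) special P D x j)%N.
  by move=> xr xout; apply: eq_big_nat => j jr; rewrite /special !decE //; lia.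
have col_side x : (1 <= x < i.-1.+1)%N -> ~~ (lo <= x < (lo + size ds).-1)%N ->
    (special P D' i.-1 x : nat) = special P D i.-1 x.
  move=> xr xout.
  have [x_lo | x_ne_lo] := eqVneq x.+1 lo.
    rewrite !special_no_run // i_eq => -[e1 e2]; apply: left; rewrite -?x_lo //=; lia.
  have [x_hi | x_ne_hi] := eqVneq x.+1 (lo + size ds)%N.
    rewrite !special_no_run // i_eq => -[e1 e2]; apply: right; rewrite -?x_hi //=; lia.
  by rewrite /special !decE //; lia.
have rows := big_nat_agree_off (ltac:(lia) : 1 <= i.-1)%N (leqnSn i.-1)
  (ltac:(lia) : i.-1.+1 <= n)%N row_side.
have cols := big_nat_agree_off lo1 (ltac:(lia) : lo <= (lo + size ds).-1)%N
  (ltac:(lia) : (lo + size ds).-1 <= i.-1.+1)%N col_side.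
rewrite !big_nat1 in rows; rewrite /num_special /=.
lia.
Qed.

Lemma row_window3 D i j : row_window D i j 3 = [:: dec D i j; dec D i j.+1; dec D i j.+2].
Proof. by rewrite /row_window /mkseq /= addn0 addn1 addn2. Qed.

Lemma row_window2 D i j : row_window D i j 2 = [:: dec D i j; dec D i j.+1].
Proof. by rewrite /row_window /mkseq /= addn0 addn1. Qed.

Section FlippableTriple.

Variables (n : nat) (k : seq int) (P : seq (seq int)) (i j : nat).
Hypotheses (G : GT n k P) (ni : (i <= n)%N) (flip_ij : flippable_triple P (i, j)).

Lemma flippable_triple_range : (1 <= j)%N /\ (j.+2 <= i)%N.
Proof. by have [/and4P [j1 ji _ _] _ _] := and3P flip_ij. Qed.

Lemma flippable_triple_run :
  [/\ ent P i j.+1 = ent P i j, ent P i j.+2 = ent P i j,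
      ent P i.-1 j = ent P i j & ent P i.-1 j.+1 = ent P i j].
Proof.
have [/and4P [j1 ji /eqP e1 /eqP e2] _ _] := and3P flip_ij.
have u0 := GT_pair_above G (i := i) (j := j) ltac:(lia) ltac:(lia) e1.
have u1 := GT_pair_above G (i := i) (j := j.+1) ltac:(lia) ltac:(lia) e2.
by split; congruence.
Qed.

Lemma flippable_triple_ends :
  ((2 <= j)%N -> ent P i.-1 j.-1 <> ent P i j) /\
  ((j.+2 < i)%N -> ent P i.-1 j.+2 <> ent P i j).
Proof.
have [_ left right] := and3P flip_ij.
by split=> jr; apply/eqP; [move: left | move: right]; case: eqP => //; lia.
Qed.

Lemma flippable_triple_isolated : isolated_window P i j (j + 3).
Proof.
have [_ r2 _ _] := flippable_triple_run; have [left right] := flippable_triple_ends.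
split=> [j2 e e' | ]; first by apply: (left j2); rewrite e' -e.
by rewrite addn3 => ji' e e'; apply: (right ji'); rewrite e' -e r2.
Qed.

Lemma arrow_ok_flippable_triple D :
  (forall l, (j <= l < j + 3)%N -> arrow_ok P D i l) <->
  triple_arrows (dec D i j) (dec D i j.+1) (dec D i j.+2).
Proof.
have [j1 ji] := flippable_triple_range.
have [r1 r2 u0 u1] := flippable_triple_run.
have [left right] := flippable_triple_ends.
split => [ok | /and4P [/implyP ab /implyP bc /implyP ba /implyP cb] l lr].
  have [[ne_a _] [[ne_b nw_b] [_ nw_c]]] :=
    (ok j ltac:(lia), (ok j.+1 ltac:(lia), ok j.+2 ltac:(lia))).
  apply/and4P; split; apply/implyP.
  - by move=> a; have [_ [_ ->]] := ne_a ltac:(lia) ltac:(lia) (esym u0) a.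
  - by move=> b; have [_ [_ ->]] := ne_b ltac:(lia) ltac:(lia) ltac:(congruence) b.
  - by move=> b; have [_ ->] := nw_b ltac:(lia) ltac:(lia) ltac:(simpl; congruence) b.
  - by move=> c; have [_ ->] := nw_c ltac:(lia) ltac:(lia) ltac:(simpl; congruence) c.
have [-> | [-> | ->]] : l = j \/ l = j.+1 \/ l = j.+2 by lia.
- split=> [_ _ _ a | _ j2 e _]; first by split; [lia | split; [exact: r1 | exact: ab]].
  by exfalso; apply: (left j2); rewrite -e.
- split=> [_ _ _ b | _ _ _ b]; first by split; [lia | split; [congruence | exact: bc]].
  by split; [rewrite /= r1 | exact: ba].
- split=> [_ ji' e _ | _ _ _ c]; last by split; [rewrite /= r1 r2 | exact: cb].
  by exfalso; apply: right; [lia | rewrite -e].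
Qed.

Lemma special_flippable_triple D :
  (\sum_(j <= l < (j + 3).-1) special P D i.-1 l =
   ne_nw (dec D i j) (dec D i j.+1) + ne_nw (dec D i j.+1) (dec D i j.+2))%N.
Proof.
have [j1 ji] := flippable_triple_range.
have [r1 r2 u0 u1] := flippable_triple_run.
have i_eq : i.-1.+1 = i by lia.
by rewrite addn3 /= big_nat_recl // big_nat1 /special i_eq u0 u1 r1 r2 !eqxx.
Qed.

End FlippableTriple.

Lemma flip_triple_step n k P D i j :
  arrowedGT n k (P, D) -> no_double n D -> (i <= n)%N -> flippable_triple P (i, j) ->
  let D' := set_row D i j (flip_triple (row_window D i j 3)) in
  [/\ arrowedGT n k (P, D'), no_double n D',
      set_row D' i j (flip_triple (row_window D' i j 3)) = D &
      (-1) ^+ num_special n (P, D') = - (-1) ^+ num_special n (P, D) :> int].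
Proof.
move=> AG ND ni fl D'; rewrite {}/D'; have [G [sh AO]] := AG.
have [j1 ji] := flippable_triple_range fl.
have i1 : (0 < i)%N by lia.
have i_range : (2 <= i <= n)%N by lia.
have j_range : (j + 3 <= i.+1)%N by lia.
have iso := flippable_triple_isolated G ni fl.
have window_ok := arrow_ok_flippable_triple G ni fl.
have single_abc : [&& single (dec D i j), single (dec D i j.+1) & single (dec D i j.+2)].
  by rewrite /single !ND //; split; lia.
have /window_ok arrows_abc : forall l, (j <= l < j + 3)%N -> arrow_ok P D i l.
  by move=> l lr; apply: AO; rewrite /pos; lia.
have [a' [b' [c' [flip_abc single' arrows' flip' odd_pairs]]]] :=
  flip_tripleP single_abc arrows_abc.
rewrite row_window3 flip_abc; set D' := set_row D i j [:: a'; b'; c'].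
have window' : row_window D' i j 3 = [:: a'; b'; c'] by apply: row_window_set_row.
have [da db dc] : [/\ dec D' i j = a', dec D' i j.+1 = b' & dec D' i j.+2 = c'].
  by move: window'; rewrite row_window3 => -[-> -> ->]; split.
split.
- apply: arrowedGT_set_row => //; first by rewrite i1.
  by apply/window_ok; rewrite da db dc.
- by apply: no_double_set_row => //=; rewrite andbT.
- by rewrite window' flip' -row_window3; apply: (set_row_restore (n := n)) => //; rewrite i1.
- have := @num_special_set_row n P D i j [:: a'; b'; c'] i_range j1 isT j_range iso.
  rewrite -/D' !(special_flippable_triple G ni fl) da db dc.
  by move/signr_flip; apply.
Qed.

Section TogglePair.

Variables (n : nat) (k : seq int) (P : seq (seq int)) (i j : nat).
Hypotheses (ji : (1 <= j < i)%N) (eq_pair : ent P i j = ent P i j.+1).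

Lemma arrow_ok_toggleable D :
  toggleable (dec D i j) (dec D i j.+1) -> forall l, (j <= l < j + 2)%N -> arrow_ok P D i l.
Proof.
move=> /orP [] /andP [/eqP a /eqP b] l lr;
  (have [-> | ->] : l = j \/ l = j.+1 by lia); rewrite /arrow_ok ?a ?b //=.
by split=> // _ _ _ _; split; [lia | split; [exact: esym | ]].
Qed.

Hypotheses (G : GT n k P) (ni : (i <= n)%N).

Lemma toggle_pair_above : ent P i.-1 j = ent P i j.
Proof. by apply: (GT_pair_above G) => //; lia. Qed.

Lemma special_toggle_pair D :
  (\sum_(j <= l < (j + 2).-1) special P D i.-1 l = ne_nw (dec D i j) (dec D i j.+1))%N.
Proof.
have i_eq : i.-1.+1 = i by lia.
by rewrite addn2 /= big_nat1 /special i_eq toggle_pair_above -eq_pair !eqxx.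
Qed.

Hypothesis no_flip : ~~ has (flippable_triple P) (sites n).

Lemma toggle_pair_ends :
  ((2 <= j)%N -> ent P i j.-1 <> ent P i j) /\ ((j.+2 <= i)%N -> ent P i j.+2 <> ent P i j).
Proof.
split=> jr e.
  have := no_flippable_eq_triple G j.-1 no_flip ni.
  by rewrite /eq_triple prednK ?e ?eq_pair ?eqxx ?andbT //; lia.
by have := no_flippable_eq_triple G j no_flip ni; rewrite /eq_triple e eq_pair !eqxx !andbT; lia.
Qed.

Lemma toggle_pair_isolated : isolated_window P i j (j + 2).
Proof.
have [left right] := toggle_pair_ends.
split=> [j2 e _ | ]; first by apply: (left j2).
by rewrite addn2 => ji' e _; apply: (right ji'); rewrite -e eq_pair.
Qed.

Lemma toggleable_pair_set_row D a b :
  toggleable (dec D i j) (dec D i j.+1) -> toggleable a b ->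
  toggleable_pair P (set_row D i j [:: a; b]) =1 toggleable_pair P D.
Proof.
move=> tD tab [i' j']; rewrite /toggleable_pair.
have [j'r | ] := boolP (1 <= j' < i')%N; last by [].
have [left right] := toggle_pair_ends.
rewrite !dec_set_row //=; try lia.
have [/and3P [/eqP ei lo hi] | far] := boolP [&& i' == i, j <= j'.+1 & j' <= j.+1]%N;
  last first.
  have -> : [&& i' == i, j <= j' & j' < j + 2]%N = false by lia.
  by have -> : [&& i' == i, j <= j'.+1 & j'.+1 < j + 2]%N = false by lia.
subst i'; have [ej | [ej | ej]] : j' = j.-1 \/ j' = j \/ j' = j.+1 by lia.
all: subst j'.
- have /negbTE -> : ent P i j.-1 != ent P i j.-1.+1.
    by rewrite prednK //; [apply/negP => /eqP e; apply: (left _ e) | ]; lia.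
  by [].
- have -> : [&& i == i, j <= j & j < j + 2]%N by lia.
  have -> : [&& i == i, j <= j.+1 & j.+1 < j + 2]%N by lia.
  by rewrite subnn subSnn /= eq_pair eqxx tab tD.
- have /negbTE -> : ent P i j.+1 != ent P i j.+2.
    by rewrite -eq_pair; apply/eqP => e; apply: (right _ (esym e)); lia.
  by [].
Qed.

End TogglePair.

Lemma toggle_step n k P D i j :
  arrowedGT n k (P, D) -> no_double n D -> (i <= n)%N ->
  ~~ has (flippable_triple P) (sites n) -> toggleable_pair P D (i, j) ->
  let D' := set_row D i j (toggle (row_window D i j 2)) in
  [/\ arrowedGT n k (P, D'), no_double n D', toggleable_pair P D' =1 toggleable_pair P D,
      set_row D' i j (toggle (row_window D' i j 2)) = D &
      (-1) ^+ num_special n (P, D') = - (-1) ^+ num_special n (P, D) :> int].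
Proof.
move=> AG ND ni no_flip /and3P [ji /eqP eq_pair tD] D'; rewrite {}/D'.
have [G [sh _]] := AG.
have i1 : (0 < i)%N by lia.
have i_range : (2 <= i <= n)%N by lia.
have j_range : (j + 2 <= i.+1)%N by lia.
have j1 : (0 < j)%N by lia.
have iso := toggle_pair_isolated ji eq_pair G ni no_flip.
have [a' [b' [toggle_ab tab' toggle' odd_pairs]]] := toggleP tD.
rewrite row_window2 toggle_ab; set D' := set_row D i j [:: a'; b'].
have window' : row_window D' i j 2 = [:: a'; b'] by apply: row_window_set_row.
have [da db] : dec D' i j = a' /\ dec D' i j.+1 = b'.
  by move: window'; rewrite row_window2 => -[-> ->].
split.
- apply: arrowedGT_set_row => //; first by rewrite i1.
  by apply: (arrow_ok_toggleable ji eq_pair); rewrite -/D' da db.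
- by apply: no_double_set_row => //=; rewrite andbT toggleable_single.
- exact: (toggleable_pair_set_row ji eq_pair G ni no_flip).
- by rewrite window' toggle' -row_window2; apply: (set_row_restore (n := n)) => //; rewrite i1.
- have := @num_special_set_row n P D i j [:: a'; b'] i_range j1 isT j_range iso.
  rewrite -/D' !(special_toggle_pair ji eq_pair G ni) da db.
  by move/signr_flip; apply.
Qed.

Lemma single_neb d : single d -> neb d -> d = arrow_ne.
Proof. by case: d => [[] []]. Qed.

Lemma single_nwb d : single d -> nwb d -> d = arrow_nw.
Proof. by case: d => [[] []]. Qed.

Lemma undecorated d : ~~ is_decorated d -> d = no_arrow.
Proof. by case: d => [[] []]. Qed.

Section FixedPoints.

Variables (n : nat) (k : seq int) (P : seq (seq int)) (D : seq (seq deco)).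
Hypotheses (AG : arrowedGT n k (P, D)) (ND : no_double n D).

Lemma ne_nw_toggleable i j : (1 <= j < i)%N -> (i <= n)%N -> ent P i j = ent P i j.+1 ->
  neb (dec D i j) -> nwb (dec D i j.+1) -> toggleable_pair P D (i, j).
Proof.
move=> /andP [j1 ji] ni e ne nw.
have pos_j : pos n i j by rewrite /pos; lia.
have pos_j1 : pos n i j.+1 by rewrite /pos; lia.
by rewrite /= j1 ji e eqxx (single_neb (ND pos_j) ne) (single_nwb (ND pos_j1) nw).
Qed.

Hypothesis no_toggle : ~~ has (toggleable_pair P D) (sites n).

Lemma no_toggle_pair i j : (1 <= j < i)%N -> (i <= n)%N -> toggleable_pair P D (i, j) = false.
Proof. by move=> ji ni; apply/negbTE/(hasPn no_toggle); rewrite mem_sites; lia. Qed.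

Lemma num_special_no_toggle : num_special n (P, D) = 0%N.
Proof.
rewrite /num_special big_nat_cond big1 // => i /andP [/andP [i1 ni] _].
rewrite big_nat_cond big1 // => j /andP [/andP [j1 ji] _]; apply/eqP; rewrite eqb0.
apply/negP => /and4P [/eqP e1 /eqP e2 ne nw].
have ji' : (1 <= j < i.+1)%N by rewrite j1.
by have := no_toggle_pair ji' ni; rewrite (ne_nw_toggleable ji' ni (etrans (esym e1) e2) ne nw).
Qed.

Hypotheses (no_flip : ~~ has (flippable_triple P) (sites n))
  (k_sorted : sorted (fun x y : int => x <= y) k).

Lemma no_flip_count_le2 i x : (1 <= i <= n)%N -> (count_mem x (nth [::] P i.-1) <= 2)%N.
Proof.
have [G _] := AG; move=> ir.
apply: sorted_count_mem_le2 (GT_row_sorted G k_sorted ir) _ => m.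
have [[_ sR] _] := G; rewrite sR; last by lia.
move=> mi; apply/negP => /and3P [/eqP a /eqP b /eqP c].
have ni : (i <= n)%N by case/andP: ir.
have := no_flippable_eq_triple G m.+1 no_flip ni; rewrite /eq_triple /ent /= a b c eqxx.
by have -> : (m.+3 <= i)%N by lia.
Qed.

Lemma no_toggle_arrows i j : pos n i j ->
  ((2 <= i)%N -> (j <= i.-1)%N -> ent P i j = ent P i.-1 j -> ~~ neb (dec D i j)) /\
  ((2 <= i)%N -> (2 <= j)%N -> ent P i j = ent P i.-1 j.-1 -> ~~ nwb (dec D i j)).
Proof.
move=> p; have [_ [_ AO]] := AG; have [ne_ok nw_ok] := AO i j p; have [j1 [ji ni]] := p.
split=> i2 jr e; apply/negP => d.
  have [ji' [e' nw]] := ne_ok i2 jr e d.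
  have jr' : (1 <= j < i)%N by rewrite j1.
  by have := no_toggle_pair jr' ni; rewrite (ne_nw_toggleable jr' ni (esym e') d nw).
have [e' ne] := nw_ok i2 jr e d.
have jr' : (1 <= j.-1 < i)%N by lia.
have nw : nwb (dec D i j.-1.+1) by rewrite prednK //; lia.
have e'' : ent P i j.-1 = ent P i j.-1.+1 by rewrite prednK //; lia.
by have := no_toggle_pair jr' ni; rewrite (ne_nw_toggleable jr' ni e'' ne nw).
Qed.

Lemma no_toggle_pairs i j1 j2 : pos n i j1 -> pos n i j2 -> (j1 < j2)%N ->
  ent P i j1 = ent P i j2 -> is_decorated (dec D i j1) || is_decorated (dec D i j2).
Proof.
move=> [a1 [a2 ni]] [b1 [b2 _]] lt e; apply/negPn/negP; rewrite negb_or => /andP [u1 u2].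
have [G _] := AG; have ir : (1 <= i <= n)%N by lia.
have [ej | nj] := eqVneq j2 j1.+1.
  subst j2; have jr : (1 <= j1 < i)%N by lia.
  by have := no_toggle_pair jr ni; rewrite /= jr e eqxx (undecorated u1) (undecorated u2).
have m1 := GT_row_mono G k_sorted (j1 := j1) (j2 := j1.+1) ir a1 ltac:(lia).
have m2 := GT_row_mono G k_sorted (j1 := j1.+1) (j2 := j1.+2) ir isT ltac:(lia).
have m3 := GT_row_mono G k_sorted (j1 := j1.+2) (j2 := j2) ir isT ltac:(lia).
have := no_flippable_eq_triple G j1 no_flip ni; rewrite /eq_triple a1.
have -> : (j1.+2 <= i)%N by lia.
have e1 : ent P i j1 = ent P i j1.+1 by apply/eqP; rewrite eq_le m1 e (le_trans m2 m3).
have e2 : ent P i j1.+1 = ent P i j1.+2 by apply/eqP; rewrite eq_le m2 -e1 e m3.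
by rewrite e1 e2 !eqxx.
Qed.

Lemma fixed_point_second_family : second_family n k (P, D).
Proof.
have [G [sh _]] := AG.
split=> //; split=> //; split=> //; split; first by move=> i x i1 ni; apply: no_flip_count_le2; lia.
by split; [exact: no_toggle_arrows | exact: no_toggle_pairs].
Qed.

End FixedPoints.

Section SecondFamily.

Variables (n : nat) (k : seq int) (P : seq (seq int)) (D : seq (seq deco)).
Hypothesis SF : second_family n k (P, D).

Lemma second_family_arrowedGT : arrowedGT n k (P, D).
Proof.
have [G [sh [_ [_ [arrows _]]]]] := SF.
split=> //; split=> // i j p; have [no_ne no_nw] := arrows i j p.
split=> [i2 ji e ne | i2 j2 e nw]; first by move: (no_ne i2 ji e); rewrite ne.
by move: (no_nw i2 j2 e); rewrite nw.
Qed.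

Lemma second_family_no_flip : ~~ has (flippable_triple P) (sites n).
Proof.
have [[[_ sR] _] [_ [_ [count2 _]]]] := SF.
apply/hasPn => -[i j]; rewrite mem_sites => /andP [ir _].
apply/negP => /and3P [/and4P [j1 ji /eqP e1 /eqP e2] _ _].
have := count2 i (ent P i j) ltac:(lia) ltac:(lia); rewrite leqNgt => /negP; apply.
apply: (@count_mem_ge3 _ _ j.-1); rewrite ?sR; try lia.
- by [].
- by rewrite prednK //; exact: esym e1.
- by rewrite prednK //; exact: esym (etrans e1 e2).
Qed.

Lemma second_family_no_toggle : ~~ has (toggleable_pair P D) (sites n).
Proof.
have [G [_ [_ [_ [arrows pairs]]]]] := SF.
apply/hasPn => -[i j]; rewrite mem_sites => /andP [/andP [i1 ni] _].
apply/negP => /and3P [ji /eqP e /orP [] /andP [/eqP a /eqP b]].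
  have := pairs i j j.+1 ltac:(rewrite /pos; lia) ltac:(rewrite /pos; lia) (ltnSn j) e.
  by rewrite a b.
have above := GT_pair_above G (ltac:(lia) : (2 <= i <= n)%N) ji e.
have [no_ne _] := arrows i j ltac:(rewrite /pos; lia).
by have := no_ne ltac:(lia) ltac:(lia) (esym above); rewrite a.
Qed.

End SecondFamily.

Definition involution (n : nat) (A : seq (seq int) * seq (seq deco)) :
    seq (seq int) * seq (seq deco) :=
  let: (P, D) := A in
  if has (flippable_triple P) (sites n) then
    let: (i, j) := first_site (flippable_triple P) n in
    (P, set_row D i j (flip_triple (row_window D i j 3)))
  else if has (toggleable_pair P D) (sites n) then
    let: (i, j) := first_site (toggleable_pair P D) n in
    (P, set_row D i j (toggle (row_window D i j 2)))
  else A.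

Lemma signr_neq_opp m : (-1) ^+ m <> - (-1) ^+ m :> int.
Proof. by rewrite -signr_odd; case: (odd m). Qed.

Lemma involutionP n k P D : sorted (fun x y : int => x <= y) k ->
  arrowedGT n k (P, D) -> no_double n D ->
  let B := involution n (P, D) in
  [/\ arrowedGT n k B /\ no_double n B.2, involution n B = (P, D),
      B != (P, D) -> (-1) ^+ num_special n B = - (-1) ^+ num_special n (P, D) :> int,
      B = (P, D) -> num_special n (P, D) = 0%N &
      B = (P, D) <-> second_family n k (P, D)].
Proof.
move=> k_sorted AG ND B; rewrite {}/B.
have [flip | no_flip] := boolP (has (flippable_triple P) (sites n)).
  have [+ site] := first_siteP flip.
  case E: (first_site _ n) site => [i j]; rewrite mem_sites => /andP [/andP [_ ni] _] fl.
  have invE D0 : involution n (P, D0) = (P, set_row D0 i j (flip_triple (row_window D0 i j 3))).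
    by rewrite /involution flip E.
  have [AG' ND' back sign] := flip_triple_step AG ND ni fl.
  rewrite !invE back; split=> //; last split.
  - by move=> [] eD; move: sign; rewrite eD => /signr_neq_opp.
  - by move=> [] eD; move: sign; rewrite eD => /signr_neq_opp.
  - by move/second_family_no_flip; rewrite flip.
have [tog | no_tog] := boolP (has (toggleable_pair P D) (sites n)).
  have [+ site] := first_siteP tog.
  case E: (first_site _ n) site => [i j]; rewrite mem_sites => /andP [/andP [_ ni] _] tp.
  have invE D0 : toggleable_pair P D0 =1 toggleable_pair P D ->
      involution n (P, D0) = (P, set_row D0 i j (toggle (row_window D0 i j 2))).
    move=> same; rewrite /involution (negbTE no_flip) (eq_has same) tog.
    by rewrite (eq_first_site (in1W same)) E.
  have [AG' ND' same back sign] := toggle_step AG ND ni no_flip tp.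
  rewrite invE // invE // back; split=> //; last split.
  - by move=> [] eD; move: sign; rewrite eD => /signr_neq_opp.
  - by move=> [] eD; move: sign; rewrite eD => /signr_neq_opp.
  - by move/second_family_no_toggle; rewrite tog.
have invE : involution n (P, D) = (P, D) by rewrite /involution (negbTE no_flip) (negbTE no_tog).
rewrite !invE eqxx; split=> //.
- by move=> _; exact: num_special_no_toggle ND no_tog.
- by split=> // _; exact: fixed_point_second_family AG ND no_tog no_flip k_sorted.
Qed.

Unset Implicit Arguments.

Theorem proposition2p2 (n : nat) (k : seq int)
  (hn : (1 <= n)%N) (hk : size k = n) (hsort : sorted (fun x y : int => x <= y) k)
  (L1 : seq (seq (seq int) * seq (seq deco)))
  (hL1u : uniq L1)
  (hL1 : forall A, A \in L1 <-> (arrowedGT n k A /\ no_double n A.2))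
  (L2 : seq (seq (seq int) * seq (seq deco)))
  (hL2u : uniq L2)
  (hL2 : forall B, B \in L2 <-> second_family n k B) :
  \sum_(A <- L1) (-1) ^+ (num_special n A) = (size L2)%:Z.
Proof.
have inv A : A \in L1 -> [/\ involution n A \in L1, involution n (involution n A) = A,
    involution n A != A ->
      (-1) ^+ num_special n (involution n A) = - (-1) ^+ num_special n A :> int,
    involution n A = A -> num_special n A = 0%N &
    involution n A = A <-> A \in L2].
  case: A => P D /hL1 [AG ND].
  have [[AG' ND'] back sign fixed0 fixedE] := involutionP hsort AG ND.
  by split=> //; [apply/hL1 | split=> [/fixedE/hL2 | /hL2/fixedE]].
rewrite (@sum_involution _ L1 (involution n)) // => [| A /inv[? _ _ _ _] | A /inv[_ ? _ _ _]
  | A /inv[_ _ ? _ _] | A /inv[_ _ _ fixed0 _] /fixed0 ->] //.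
congr Posz; rewrite -size_filter; apply/perm_size/uniq_perm; rewrite ?filter_uniq // => A.
rewrite mem_filter; apply/andP/idP => [[/eqP fixed A1] | A2].
  by have [_ _ _ _ <-] := inv A A1.
have A1 : A \in L1.
  case: A A2 => P D /hL2 SF; apply/hL1; split; first exact: second_family_arrowedGT.
  by have [_ [_ []]] := SF.
by have [_ _ _ _ fixedE] := inv A A1; split=> //; apply/eqP/fixedE.
Qed.
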